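(* Let $P$ be a finite poset and $I\subseteq k[x_P]$ a monomial ideal. Then there is a poset filter $\mathcal{F}\subseteq\mathrm{Hom}(P,\mathbb{N})$ such that the set of monomials of $I$ equals $\{\overline{\Lambda}\phi:\phi\in\mathcal{F}\}$ if and only if $I$ is $P$-stable.
   Context: $\mathbb{N}=\{0,1,\dots\}$; $\mathrm{Hom}(P,\mathbb{N})$ is the set of isotone maps $P\to\mathbb{N}$ ordered pointwise. The ascent of $\phi$ is $\Lambda\phi=\{(p,i)\in P\times\mathbb{N}:\phi(q)\le i<\phi(p)\ \forall q<p\}$, and $\overline{\Lambda}\phi=\prod_{(p,i)\in\Lambda\phi}x_p\in k[x_P]$ ($k$ a field, $k[x_P]$ the polynomial ring in variables $x_p$, $p\in P$). For $b\in P$, a $b$-chain is a multichain $C: p_1\le\dots\le p_r$ in $P$ with $p_r\le b$; its length is $r$ and $m_C=\prod_{i=1}^r x_{p_i}$. $C$ is in a monomial $m$ if $m_C$ divides $m$; it is a longest $b$-chain in $m$ if no $b$-chain in $m$ is longer. $C$ goes through $a$ if $a\le b$ and $a$ is comparable to every $p_i$ (so $a$ can be inserted to give a longer multichain). For an antichain $B$, $m_B=\prod_{b\in B}x_b$. A monomial ideal $I\subseteq k[x_P]$ is $P$-stable if: whenever $m=n\,m_B\in I$ with $n$ a monomial and $B$ an antichain, and $a\in P$ is such that for every $b\in B$ some longest $b$-chain in $m$ goes through $a$, then $n\,x_a\in I$. *)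

From mathcomp Require Import all_boot all_order all_algebra.
From mathcomp Require Import mpoly.
Set Implicit Arguments. Unset Strict Implicit. Unset Printing Implicit Defensive.
Import GRing.Theory.
Local Open Scope ring_scope.

(* A finite poset P is represented by its underlying set 'I_n together with
   a (boolean) partial order [le] on it. *)
Definition partial_order n (le : rel 'I_n) : Prop :=
  [/\ reflexive le, antisymmetric le & transitive le].

Definition slt n (le : rel 'I_n) (q p : 'I_n) : bool := le q p && (q != p).

Definition isotone n (le : rel 'I_n) (phi : {ffun 'I_n -> nat}) : Prop :=
  forall p q, le p q -> (phi p <= phi q)%N.

Definition hom_filter n (le : rel 'I_n) (F : {ffun 'I_n -> nat} -> Prop) : Prop :=
  (forall phi, F phi -> isotone le phi) /\
  (forall phi psi, F phi -> isotone le psi -> (forall p, phi p <= psi p)%N -> F psi).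

Definition ascent n (le : rel 'I_n) (phi : {ffun 'I_n -> nat}) (p : 'I_n) (i : nat) : bool :=
  (i < phi p)%N && [forall q : 'I_n, slt le q p ==> (phi q <= i)%N].

(* Lambda-bar phi = prod_{(p,i) in Lambda phi} x_p, as an exponent vector:
   the exponent of x_p is #{i : (p,i) in Lambda phi} (such i are < phi p). *)
Definition ascent_mon n (le : rel 'I_n) (phi : {ffun 'I_n -> nat}) : 'X_{1..n} :=
  [multinom #|[pred i : 'I_(phi p) | ascent le phi p i]| | p < n].

Definition is_ideal (k : fieldType) n (I : {pred {mpoly k[n]}}) : Prop :=
  [/\ 0 \in I,
      (forall p q, p \in I -> q \in I -> p + q \in I) &
      (forall p q, q \in I -> p * q \in I)].

(* monomial ideal: generated by monomials, i.e. p in I iff every monomial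
   occurring in p lies in I. *)
Definition is_monomial_ideal (k : fieldType) n (I : {pred {mpoly k[n]}}) : Prop :=
  is_ideal I /\ (forall p, p \in I <-> (forall m, m \in msupp p -> 'X_[m] \in I)).

(* multichains, represented as sequences p_1 <= ... <= p_r *)
Definition mon_of_seq n (C : seq 'I_n) : 'X_{1..n} :=
  [multinom count_mem p C | p < n].

Definition mon_divides n (m1 m2 : 'X_{1..n}) : Prop :=
  forall p, (m1 p <= m2 p)%N.

Definition bchain n (le : rel 'I_n) (b : 'I_n) (C : seq 'I_n) : Prop :=
  sorted le C /\ (forall p, p \in C -> le p b).

Definition bchain_in n (le : rel 'I_n) (b : 'I_n) (m : 'X_{1..n}) (C : seq 'I_n) : Prop :=
  bchain le b C /\ mon_divides (mon_of_seq C) m.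

Definition longest_bchain_in n (le : rel 'I_n) (b : 'I_n) (m : 'X_{1..n})
    (C : seq 'I_n) : Prop :=
  bchain_in le b m C /\
  (forall C', bchain_in le b m C' -> (size C' <= size C)%N).

Definition goes_through n (le : rel 'I_n) (a b : 'I_n) (C : seq 'I_n) : Prop :=
  le a b /\ (forall p, p \in C -> le a p || le p a).

Definition antichain n (le : rel 'I_n) (B : {set 'I_n}) : Prop :=
  forall b b', b \in B -> b' \in B -> b != b' -> ~~ le b b' /\ ~~ le b' b.

Definition mon_of_set n (B : {set 'I_n}) : 'X_{1..n} :=
  [multinom (p \in B : nat) | p < n].

Definition P_stable (k : fieldType) n (le : rel 'I_n) (I : {pred {mpoly k[n]}}) : Prop :=
  forall (m0 : 'X_{1..n}) (B : {set 'I_n}) (a : 'I_n),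
    antichain le B ->
    'X_[(m0 + mon_of_set B)%MM] \in I ->
    (forall b, b \in B -> exists C,
        longest_bchain_in le b (m0 + mon_of_set B)%MM C /\ goes_through le a b C) ->
    'X_[(m0 + mnm1 a)%MM] \in I.

(* The map phi |-> Lambda-bar phi is a bijection from Hom(P, N) onto the
   monomials: its inverse sends m to the function L_m(p) = length of a longest
   p-chain in m, since L_m(p) = max_{q < p} L_m(q) + m_p is exactly the
   recursion that inverts Lambda-bar phi (p) = phi(p) - max_{q < p} phi(q).

   If the monomials of I are Lambda-bar of a filter, write m = n m_B and
   m' = n x_a.  Rerouting a longest b-chain of m through a (insert a, drop one
   copy of b) gives L_m <= L_m' pointwise, so m' lies in I as well.
   Conversely, {phi : Lambda-bar phi in I} is a filter as soon as it is stable
   under raising an isotone phi by one at a single point a.  Such a step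
   replaces the factor m_B of Lambda-bar phi by x_a, where B is the antichain of
   the b > a with max_{q < b} phi(q) = phi(a); a longest a-chain followed by
   copies of b is a longest b-chain through a, so P-stability applies. *)

From mathcomp Require Import all_boot all_order all_algebra.
From mathcomp Require Import mpoly.
From mathcomp Require Import zify.
Set Implicit Arguments. Unset Strict Implicit. Unset Printing Implicit Defensive.

Lemma card_ord_geq k M : #|[pred i : 'I_k | M <= i]| = k - M.
Proof.
by rewrite -sum1_card -[RHS]muln1 -sum_nat_const_nat big_geq_mkord.
Qed.

Lemma size_sum_count_mem (T : finType) (s : seq T) :
  size s = \sum_q count_mem q s.
Proof.
elim: s => [|x s IH] /=; first by rewrite big1.
rewrite big_split /= -IH (bigD1 x) //= eqxx big1 // => q.
by rewrite eq_sym => /negbTE ->.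
Qed.

Section Poset.
Variables (n : nat) (le : rel 'I_n).
Hypothesis le_order : partial_order le.

Let le_refl : reflexive le. Proof. by case: le_order. Qed.
Let le_anti : antisymmetric le. Proof. by case: le_order. Qed.
Let le_trans : transitive le. Proof. by case: le_order. Qed.

Lemma slt_nge q p : slt le q p -> ~~ le p q.
Proof.
case/andP=> le_qp neq_qp; apply: contra neq_qp => le_pq.
by apply/eqP/le_anti; rewrite le_qp le_pq.
Qed.

Definition card_down (p : 'I_n) : nat := #|[pred q | le q p]|.

Lemma card_down_lt q p : slt le q p -> card_down q < card_down p.
Proof.
move=> lt_qp; apply/proper_card/properP; split.
  by apply/subsetP=> x; rewrite !inE => le_xq; apply: le_trans le_xq (proj1 (andP lt_qp)).
by exists p; rewrite !inE ?le_refl ?slt_nge.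
Qed.

Lemma poset_ind (P : 'I_n -> Prop) :
  (forall p, (forall q, slt le q p -> P q) -> P p) -> forall p, P p.
Proof.
move=> IHp p; have [d] := ubnP (card_down p); elim: d p => // d IHd p lt_pd.
by apply: IHp => q /card_down_lt lt_qp; apply: IHd; apply: leq_trans lt_qp _.
Qed.

Definition max_below (phi : 'I_n -> nat) (p : 'I_n) : nat :=
  \max_(q | slt le q p) phi q.

Lemma max_below_le (phi : {ffun 'I_n -> nat}) p :
  isotone le phi -> max_below phi p <= phi p.
Proof. by move=> iso_phi; apply/bigmax_leqP=> q /andP[le_qp _]; apply: iso_phi. Qed.

Lemma max_below_ge (phi : 'I_n -> nat) q p : slt le q p -> phi q <= max_below phi p.
Proof. exact: (@leq_bigmax_cond _ (fun q => slt le q p) phi q). Qed.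

Lemma max_below_mono (phi psi : 'I_n -> nat) p :
  (forall q, slt le q p -> phi q <= psi q) -> max_below phi p <= max_below psi p.
Proof.
move=> le_phi_psi; apply/bigmax_leqP=> q lt_qp.
exact: leq_trans (le_phi_psi q lt_qp) (max_below_ge psi lt_qp).
Qed.

Lemma max_below_attained (phi : 'I_n -> nat) p :
  max_below phi p = 0 \/ exists2 q, slt le q p & phi q = max_below phi p.
Proof.
rewrite /max_below; elim/big_ind: _ => [|x y|q lt_qp]; [by left| |by right; exists q].
by rewrite /maxn; case: ltnP.
Qed.

Lemma ascent_monE (phi : {ffun 'I_n -> nat}) p :
  ascent_mon le phi p = phi p - max_below phi p.
Proof.
rewrite /ascent_mon mnmE -card_ord_geq; apply: eq_card => i.
rewrite !inE /ascent ltn_ord /=.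
apply/forallP/bigmax_leqP=> [le_below q lt_qp|le_below q].
  exact: (implyP (le_below q)).
exact/implyP/le_below.
Qed.

Lemma ascent_mon_inj (phi psi : {ffun 'I_n -> nat}) :
  isotone le phi -> isotone le psi -> ascent_mon le phi = ascent_mon le psi -> phi = psi.
Proof.
move=> iso_phi iso_psi eq_asc; apply/ffunP; elim/poset_ind => p IHp.
have eq_max : max_below phi p = max_below psi p by apply: eq_bigr.
have := congr1 (fun m : 'X_{1..n} => m p) eq_asc; rewrite /= !ascent_monE eq_max.
by have := max_below_le p iso_phi; have := max_below_le p iso_psi; lia.
Qed.

Definition chain_in (b : 'I_n) (m : 'X_{1..n}) (s : seq 'I_n) : bool :=
  [&& sorted le s, all (le^~ b) s & [forall q, count_mem q s <= m q]].

Lemma bchain_inP b m s : reflect (bchain_in le b m s) (chain_in b m s).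
Proof.
rewrite /bchain_in /bchain /mon_divides /mon_of_seq.
apply: (iffP and3P) => [[sorted_s /allP below_b /forallP count_s]|].
  by do !split=> // q; rewrite mnmE.
move=> [[sorted_s below_b] count_s].
by split=> //; [apply/allP | apply/forallP=> q; have := count_s q; rewrite mnmE].
Qed.

Lemma chain_in_subseq b m s s' : subseq s' s -> chain_in b m s -> chain_in b m s'.
Proof.
move=> sub_s's /and3P[sorted_s all_s /forallP count_s]; apply/and3P; split.
- exact: subseq_sorted sub_s's sorted_s.
- by apply/allP=> x /(mem_subseq sub_s's); apply: (allP all_s).
- by apply/forallP=> q; apply: leq_trans (count_s q); apply: leq_count_subseq.
Qed.

Lemma chain_in_widen b c m s :
  all (le^~ c) s -> chain_in b m s -> chain_in c m s.
Proof. by move=> all_c /and3P[? _ ?]; apply/and3P. Qed.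

Lemma chain_in_cat_nseq m p s :
  chain_in p m s -> p \notin s -> chain_in p m (s ++ nseq (m p) p).
Proof.
move=> /and3P[sorted_s /allP below_p /forallP count_s] p_notin_s.
apply/and3P; split.
- rewrite (sorted_pairwise le_trans) pairwise_cat -(sorted_pairwise le_trans) sorted_s.
  apply/and3P; split=> //.
    by apply/allrelP=> x y /below_p le_xp; rewrite mem_nseq => /andP[_ /eqP ->].
  by elim: (m p) => //= k ->; rewrite all_nseq le_refl orbT.
- by rewrite all_cat all_nseq le_refl orbT andbT; apply/allP.
- apply/forallP=> q; rewrite count_cat count_nseq /=.
  by case: eqVneq => [<-|_]; rewrite ?(count_memPn p_notin_s) ?mul1n ?mul0n ?addn0.
Qed.

Lemma chain_in_extend m q p s :
  slt le q p -> chain_in q m s -> chain_in p m (s ++ nseq (m p) p).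
Proof.
move=> lt_qp chain_s; have /andP[le_qp _] := lt_qp.
have below_q : all (le^~ q) s by case/and3P: chain_s.
apply: chain_in_cat_nseq.
  by apply: chain_in_widen chain_s; apply: sub_all below_q => x /le_trans; apply.
exact: contra (allP below_q p) (slt_nge lt_qp).
Qed.

Lemma chain_in_size b m s : chain_in b m s -> size s <= mdeg m.
Proof.
case/and3P=> _ _ /forallP count_s.
by rewrite size_sum_count_mem mdegE; apply: leq_sum => q _.
Qed.

(* Chains in m have at most mdeg m elements, so the maximum is over a finite
   range. *)
Definition chain_len (m : 'X_{1..n}) (p : 'I_n) : nat :=
  \max_(k < (mdeg m).+1 | [exists t : k.-tuple 'I_n, chain_in p m t]) k.

Lemma chain_len_ub m p s : chain_in p m s -> size s <= chain_len m p.
Proof.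
move=> chain_s; have size_s : size s < (mdeg m).+1.
  by rewrite ltnS (chain_in_size chain_s).
apply: (@leq_bigmax_cond _ _ (fun k : 'I_ _ => nat_of_ord k) (Ordinal size_s)).
by apply/existsP; exists (in_tuple s).
Qed.

Lemma chain_len_attained m p : exists2 s, chain_in p m s & size s = chain_len m p.
Proof.
rewrite /chain_len; elim/big_ind: _ => [|x y|k /existsP[t chain_t]].
- by exists [::]; rewrite //= /chain_in /=; apply/forallP.
- by rewrite /maxn; case: ltnP.
- by exists t; rewrite ?size_tuple.
Qed.

Lemma chain_len_drop_top m p s :
  chain_in p m s -> size (filter (predC1 p) s) <= max_below (chain_len m) p.
Proof.
move=> chain_s; have chain_t := chain_in_subseq (filter_subseq (predC1 p) s) chain_s.
case/and3P: (chain_s) => _ /allP below_p _.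
case/lastP E: (filter (predC1 p) s) chain_t => [//|t q] chain_tq.
have /andP[neq_qp q_in_s] : predC1 p q && (q \in s).
  by rewrite -mem_filter E mem_rcons mem_head.
have lt_qp : slt le q p by rewrite /slt below_p.
apply: leq_trans (max_below_ge _ lt_qp); apply: chain_len_ub.
apply: chain_in_widen (chain_tq); case/and3P: chain_tq => + _ _.
by rewrite (sorted_pairwise le_trans) pairwise_rcons all_rcons le_refl => /andP[].
Qed.

Lemma chain_lenE m p : chain_len m p = max_below (chain_len m) p + m p.
Proof.
apply/eqP; rewrite eqn_leq; apply/andP; split.
  have [s chain_s <-] := chain_len_attained m p.
  rewrite -(count_predC (pred1 p)) addnC leq_add //.
    by rewrite -size_filter; apply: chain_len_drop_top.
  by case/and3P: chain_s => _ _ /forallP.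
have [->|[q lt_qp <-]] := max_below_attained (chain_len m) p.
  rewrite -(size_nseq (m p) p); apply: chain_len_ub.
  by apply: (@chain_in_cat_nseq m p [::]) => //; apply/and3P; split=> //; apply/forallP.
have [s chain_s <-] := chain_len_attained m q.
by rewrite -(size_nseq (m p) p) -size_cat chain_len_ub // (chain_in_extend lt_qp).
Qed.

Definition chain_lenF (m : 'X_{1..n}) : {ffun 'I_n -> nat} := [ffun p => chain_len m p].

Lemma isotone_chain_lenF m : isotone le (chain_lenF m).
Proof.
move=> p q le_pq; rewrite !ffunE; have [s chain_s <-] := chain_len_attained m p.
apply: chain_len_ub; apply: chain_in_widen (chain_s).
by case/and3P: chain_s => _ + _; apply: sub_all => x /le_trans; apply.
Qed.

Lemma ascent_mon_chain_lenF m : ascent_mon le (chain_lenF m) = m.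
Proof.
apply/mnmP=> p; rewrite ascent_monE ffunE chain_lenE.
have -> : max_below (chain_lenF m) p = max_below (chain_len m) p.
  by apply: eq_bigr => q _; rewrite ffunE.
by rewrite addKn.
Qed.

Lemma chain_lenF_ascent_mon (phi : {ffun 'I_n -> nat}) :
  isotone le phi -> chain_lenF (ascent_mon le phi) = phi.
Proof.
move=> iso_phi; apply: ascent_mon_inj; rewrite ?ascent_mon_chain_lenF //.
exact: isotone_chain_lenF.
Qed.

Lemma chain_len_ascent_mon (phi : {ffun 'I_n -> nat}) p :
  isotone le phi -> chain_len (ascent_mon le phi) p = phi p.
Proof. by move/chain_lenF_ascent_mon/ffunP/(_ p); rewrite ffunE. Qed.

Lemma longest_chain_through m a b :
  slt le a b -> max_below (chain_len m) b = chain_len m a ->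
  exists C, longest_bchain_in le b m C /\ goes_through le a b C.
Proof.
move=> lt_ab max_b; have /andP[le_ab _] := lt_ab.
have [s chain_s size_s] := chain_len_attained m a.
exists (s ++ nseq (m b) b); split; [split|split=> //].
- exact/bchain_inP/(chain_in_extend lt_ab).
- move=> C /bchain_inP /chain_len_ub.
  by rewrite chain_lenE max_b -size_s size_cat size_nseq.
- case/and3P: chain_s => _ /allP below_a _ x.
  by rewrite mem_cat mem_nseq => /orP[/below_a ->|/andP[_ /eqP ->]]; rewrite ?le_ab ?orbT.
Qed.

Definition insert_through (a : 'I_n) (s : seq 'I_n) : seq 'I_n :=
  filter (le^~ a) s ++ a :: filter (predC (le^~ a)) s.

Lemma perm_insert_through a s : perm_eq (insert_through a s) (a :: s).
Proof. by rewrite /insert_through -cat1s perm_catCA /= perm_cons perm_filterC. Qed.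

Lemma sorted_insert_through a s :
  sorted le s -> (forall x, x \in s -> le a x || le x a) ->
  sorted le (insert_through a s).
Proof.
rewrite !(sorted_pairwise le_trans) => pairwise_s comparable_a.
have above_a x : x \in filter (predC (le^~ a)) s -> le a x.
  by rewrite mem_filter /= => /andP[/negbTE nle_xa /comparable_a]; rewrite nle_xa orbF.
rewrite pairwise_cat pairwise_cons !pairwise_filter // !andbT; apply/andP; split.
  apply/allrelP=> x y; rewrite mem_filter => /andP[le_xa _].
  by rewrite inE => /predU1P[->|/above_a]; [|apply: le_trans].
by apply/allP=> x /above_a.
Qed.

Lemma chain_reroute m0 B a p C :
  antichain le B -> p \in B -> a != p ->
  chain_in p (m0 + mon_of_set B)%MM C -> goes_through le a p C ->
  exists2 D, chain_in p (m0 + mnm1 a)%MM D & size C <= size D.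
Proof.
move=> anti_B p_in_B neq_ap /and3P[sorted_C /allP below_p /forallP count_C].
move=> [le_ap comp_C].
set S := insert_through a C; have perm_S : perm_eq S (a :: C) := perm_insert_through a C.
have in_B_C q : q \in C -> q \in B -> q = p.
  move=> q_in_C q_in_B; apply/eqP; apply: contraTT (below_p q q_in_C) => neq_qp.
  by case: (anti_B q p q_in_B p_in_B neq_qp).
exists (rem p S).
  apply/and3P; split.
  - exact: subseq_sorted (rem_subseq p S) (sorted_insert_through sorted_C comp_C).
  - apply/allP=> x /(mem_subseq (rem_subseq p S)); rewrite (perm_mem perm_S).
    by rewrite inE => /predU1P[->|/below_p].
  - apply/forallP=> q; rewrite count_rem (permP perm_S) /= mnmDE mnm1E.
    have := count_C q; rewrite mnmDE /mon_of_set mnmE.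
    case: (boolP (q \in B)) => [q_in_B|_] count_qC; last first.
      rewrite addn0 in count_qC.
      by apply: leq_trans (leq_subr _ _) _; rewrite addnC leq_add2r.
    have [q_in_C|q_notin_C] := boolP (q \in C); last first.
      rewrite (count_memPn q_notin_C) addn0.
      exact: leq_trans (leq_subr _ _) (leq_addl _ _).
    have eq_qp := in_B_C q q_in_C q_in_B; move: neq_ap.
    rewrite -eq_qp (perm_mem perm_S) inE q_in_C orbT eqxx => /negbTE ->.
    by rewrite /= add0n addn0 leq_subLR addnC.
have size_S : size S = (size C).+1 by rewrite (perm_size perm_S).
by have [/size_rem ->|/rem_id ->] := boolP (p \in S); rewrite size_S.
Qed.

Lemma chain_len_exchange m0 B a :
  antichain le B ->
  (forall b, b \in B -> exists C,
     longest_bchain_in le b (m0 + mon_of_set B)%MM C /\ goes_through le a b C) ->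
  forall p, chain_len (m0 + mon_of_set B)%MM p <= chain_len (m0 + mnm1 a)%MM p.
Proof.
move=> anti_B through_a; elim/poset_ind => p IHp.
case: (boolP ((p \in B) && (a != p))) => [/andP[p_in_B neq_ap]|not_rerouted].
  have [C [[/bchain_inP chain_C longest_C] through_C]] := through_a p p_in_B.
  have [D chain_D le_CD] := chain_reroute anti_B p_in_B neq_ap chain_C through_C.
  have [s /bchain_inP chain_s <-] := chain_len_attained (m0 + mon_of_set B)%MM p.
  exact: leq_trans (longest_C s chain_s) (leq_trans le_CD (chain_len_ub chain_D)).
rewrite !chain_lenE leq_add ?max_below_mono // !mnmDE mnm1E /mon_of_set mnmE leq_add2l.
by case: (p \in B) not_rerouted => //=; rewrite negbK => ->.
Qed.

Definition incr_at (phi : {ffun 'I_n -> nat}) (a : 'I_n) : {ffun 'I_n -> nat} :=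
  [ffun p => phi p + (p == a)].

(* The b > a whose exponent in Lambda-bar phi drops when phi a is raised. *)
Definition ascent_drop (phi : {ffun 'I_n -> nat}) (a : 'I_n) : {set 'I_n} :=
  [set b | slt le a b && (max_below phi b == phi a)].

Section Increment.
Variables (phi : {ffun 'I_n -> nat}) (a : 'I_n).
Hypotheses (iso_phi : isotone le phi) (iso_incr : isotone le (incr_at phi a)).

Lemma incr_at_lt p : slt le a p -> phi a < phi p.
Proof.
case/andP=> le_ap neq_ap; have := iso_incr le_ap.
by rewrite !ffunE eqxx eq_sym (negbTE neq_ap) addn0 addn1.
Qed.

Lemma max_below_incr_at p :
  max_below (incr_at phi a) p =
  if slt le a p then maxn (max_below phi p) (phi a).+1 else max_below phi p.
Proof.
rewrite /max_below; case: ifPn => [lt_ap|not_lt_ap].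
  rewrite (bigD1 a lt_ap) [in RHS](bigD1 a lt_ap) /= ffunE eqxx addn1 maxnC.
  rewrite [maxn (phi a) _]maxnC -maxnA (maxn_idPr (leqnSn _)); congr maxn.
  by apply: eq_bigr => q /andP[_ neq_qa]; rewrite ffunE (negbTE neq_qa) addn0.
apply: eq_bigr => q lt_qp; rewrite ffunE.
case: eqVneq lt_qp => [->|]; last by rewrite addn0.
by rewrite (negbTE not_lt_ap).
Qed.

Lemma ascent_drop_sub : (mon_of_set (ascent_drop phi a) <= ascent_mon le phi)%MM.
Proof.
apply/mnm_lepP=> p; rewrite /mon_of_set mnmE ascent_monE inE.
by case: andP => //= -[lt_ap /eqP ->]; rewrite subn_gt0 incr_at_lt.
Qed.

Lemma ascent_mon_incr_at :
  ascent_mon le (incr_at phi a) =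
  (ascent_mon le phi - mon_of_set (ascent_drop phi a) + mnm1 a)%MM.
Proof.
apply/mnmP=> p; rewrite mnmDE mnmBE mnm1E /mon_of_set mnmE !ascent_monE.
rewrite max_below_incr_at inE ffunE.
case: (eqVneq p a) => [->|neq_pa].
  have -> : slt le a a = false by rewrite /slt eqxx andbF.
  by have := max_below_le a iso_phi; rewrite /=; lia.
rewrite !addn0.
case: ifP => [lt_ap|_] /=; last by rewrite subn0.
have := max_below_ge phi lt_ap; have := incr_at_lt lt_ap; have := max_below_le p iso_phi.
by case: eqVneq => [->|neq_max] /=; lia.
Qed.

Lemma antichain_ascent_drop : antichain le (ascent_drop phi a).
Proof.
have incomparable b b' : b \in ascent_drop phi a -> b' \in ascent_drop phi a ->
    b != b' -> ~~ le b b'.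
  rewrite !inE => /andP[lt_ab _] /andP[_ /eqP max_b'] neq_bb'; apply/negP=> le_bb'.
  have lt_bb' : slt le b b' by rewrite /slt le_bb'.
  by have := max_below_ge phi lt_bb'; rewrite max_b' leqNgt incr_at_lt.
by move=> b b' b_in b'_in neq_bb'; rewrite !incomparable // eq_sym.
Qed.

Lemma ascent_drop_longest_chain b : b \in ascent_drop phi a ->
  exists C, longest_bchain_in le b (ascent_mon le phi) C /\ goes_through le a b C.
Proof.
rewrite inE => /andP[lt_ab /eqP max_b]; apply: longest_chain_through => //.
rewrite chain_len_ascent_mon // -max_b; apply: eq_bigr => q _.
exact: chain_len_ascent_mon.
Qed.
End Increment.

Lemma isotone_incr_at_argmax (phi psi : {ffun 'I_n -> nat}) a :
  isotone le phi -> isotone le psi -> (forall p, phi p <= psi p) ->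
  (forall q, phi q < psi q -> card_down q <= card_down a) ->
  phi a < psi a -> isotone le (incr_at phi a).
Proof.
move=> iso_phi iso_psi le_phi_psi max_a lt_a p q le_pq; rewrite !ffunE.
case: (eqVneq q a) le_pq => [->|neq_qa] le_pq.
  by rewrite /=; apply: leq_add (iso_phi _ _ le_pq) (leq_b1 _).
rewrite /= addn0; case: (eqVneq p a) => [eq_pa|_]; last by rewrite addn0 iso_phi.
rewrite eq_pa in le_pq *; rewrite addn1 ltn_neqAle iso_phi // andbT.
apply/eqP=> eq_aq; have lt_q : phi q < psi q by rewrite -eq_aq (leq_trans lt_a) ?iso_psi.
have lt_aq : slt le a q by rewrite /slt le_pq eq_sym.
by have := max_a q lt_q; rewrite leqNgt card_down_lt.
Qed.

Lemma isotone_up_closed (Q : {ffun 'I_n -> nat} -> Prop) :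
  (forall phi a, isotone le phi -> isotone le (incr_at phi a) -> Q phi ->
     Q (incr_at phi a)) ->
  forall phi psi : {ffun 'I_n -> nat}, isotone le phi -> isotone le psi ->
  (forall p, phi p <= psi p) -> Q phi -> Q psi.
Proof.
move=> Q_incr phi psi iso_phi iso_psi.
move sum_d: (\sum_p (psi p - phi p)) => d.
elim: d phi iso_phi sum_d => [|d IHd] phi iso_phi sum_d le_phi_psi Q_phi.
  suff -> : psi = phi by [].
  apply/ffunP=> p; apply/eqP; rewrite eqn_leq le_phi_psi andbT -subn_eq0.
  by move/eqP: sum_d; rewrite sum_nat_eq0 => /forallP /(_ p).
have [p lt_p] : exists p, phi p < psi p.
  case: (pickP (fun p => phi p < psi p)) => [p lt_p|none]; first by exists p.
  by move: sum_d; rewrite big1 // => p _; apply/eqP; rewrite subn_eq0 leqNgt none.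
case: (@arg_maxnP _ p (fun p => phi p < psi p) card_down lt_p) => a lt_a max_a.
have iso_incr := isotone_incr_at_argmax iso_phi iso_psi le_phi_psi max_a lt_a.
apply: (IHd _ iso_incr); last exact: Q_incr _ _ iso_phi iso_incr Q_phi.
- rewrite (bigD1 a) //= in sum_d; rewrite (bigD1 a) //= ffunE eqxx.
  rewrite (eq_bigr (fun p => psi p - phi p)) => [|q neq_qa]; last first.
    by rewrite ffunE (negbTE neq_qa) addn0.
  by move: sum_d lt_a; rewrite /=; lia.
- by move=> q; rewrite ffunE; case: eqP => [->|_]; rewrite ?addn1 ?addn0.
Qed.

Variables (k : fieldType) (I : {pred {mpoly k[n]}}).

Lemma P_stable_incr_at (phi : {ffun 'I_n -> nat}) a :
  P_stable le I -> isotone le phi -> isotone le (incr_at phi a) ->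
  'X_[ascent_mon le phi] \in I -> 'X_[ascent_mon le (incr_at phi a)] \in I.
Proof.
move=> I_stable iso_phi iso_incr phi_in_I.
have split_asc := submK (ascent_drop_sub iso_incr).
rewrite ascent_mon_incr_at //; apply: (I_stable _ _ a (antichain_ascent_drop iso_incr)).
  by rewrite split_asc.
by move=> b b_in; rewrite split_asc; apply: ascent_drop_longest_chain.
Qed.

Lemma hom_filter_P_stable : P_stable le I ->
  hom_filter le (fun phi => isotone le phi /\ 'X_[ascent_mon le phi] \in I).
Proof.
move=> I_stable; split=> [phi []//|phi psi [iso_phi phi_in_I] iso_psi le_phi_psi].
split=> //; pose Q f := 'X_[ascent_mon le f] \in I.
apply: (@isotone_up_closed Q _ phi) => // f a; exact: P_stable_incr_at.
Qed.

Lemma P_stable_hom_filter (F : {ffun 'I_n -> nat} -> Prop) :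
  hom_filter le F ->
  (forall m, 'X_[m] \in I <-> exists phi, F phi /\ ascent_mon le phi = m) ->
  P_stable le I.
Proof.
move=> [F_iso F_up] I_F m0 B a anti_B m_in_I through_a.
have [phi [F_phi asc_phi]] := (I_F _).1 m_in_I.
apply/(I_F _).2; exists (chain_lenF (m0 + mnm1 a)).
split; last exact: ascent_mon_chain_lenF.
apply: (F_up phi) => // [|p]; first exact: isotone_chain_lenF.
rewrite -(chain_lenF_ascent_mon (F_iso _ F_phi)) asc_phi !ffunE.
exact: chain_len_exchange.
Qed.

End Poset.

Local Open Scope ring_scope.

Theorem proposition3p11 (k : fieldType) (n : nat) (le : rel 'I_n)
    (I : {pred {mpoly k[n]}}) :
  partial_order le -> is_monomial_ideal I ->
  (exists F : {ffun 'I_n -> nat} -> Prop,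
      hom_filter le F /\
      (forall m : 'X_{1..n}, 'X_[m] \in I <->
         exists phi, F phi /\ ascent_mon le phi = m))
  <-> P_stable le I.
Proof.
move=> le_order _; split=> [[F [F_filter I_F]]|I_stable].
  exact: P_stable_hom_filter F_filter I_F.
exists (fun phi => isotone le phi /\ 'X_[ascent_mon le phi] \in I).
split; first exact: hom_filter_P_stable.
move=> m; split=> [m_in_I|[phi [[_ phi_in_I] <-]]] //.
exists (chain_lenF le m); rewrite ascent_mon_chain_lenF //.
by do !split=> //; apply: isotone_chain_lenF.
Qed.
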